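(* Let $\Sigma$ be a ranked alphabet, $B$ a strong bimonoid and $\mathcal{A}$ a $(\Sigma,B)$-wta. If $B$ is locally finite, or if $B$ is multiplicatively locally finite and $\mathcal{A}$ is bottom-up deterministic, then the Nerode $(\Sigma,B)$-algebra $\mathcal{N}(\mathcal{A})$ is finite and $[\![\mathcal{A}]\!]^{\mathrm{init}}=[\![\mathrm{rel}(\mathcal{N}(\mathcal{A}))]\!]^{\mathrm{init}}$.
   Context: Ranked alphabet $\Sigma$ ($\Sigma^{(0)}\ne\emptyset$), trees $T_\Sigma$; strong bimonoid $(B,\oplus,\otimes,\mathbb{0},\mathbb{1})$ (commutative monoid $(B,\oplus,\mathbb{0})$, monoid $(B,\otimes,\mathbb{1})$, $\mathbb{0}\ne\mathbb{1}$, $\mathbb{0}$ absorbing, no distributivity). $B$ is locally finite if every finite subset generates a finite subalgebra of $(B,\oplus,\otimes,\mathbb{0},\mathbb{1})$; multiplicatively locally finite if every finite subset generates a finite submonoid of $(B,\otimes,\mathbb{1})$. $(\Sigma,B)$-wta $\mathcal{A}=(Q,\delta,F)$: $Q$ finite nonempty, $\delta_k:Q^k\times\Sigma^{(k)}\times Q\to B$, $F:Q\to B$. Vector algebra $\mathrm{V}(\mathcal{A})=(B^Q,\delta_{\mathcal{A}})$, $\delta_{\mathcal{A}}(\sigma)(v_1,\dots,v_k)_q=\bigoplus_{p_1,\dots,p_k}\big(\bigotimes_{i=1}^k(v_i)_{p_i}\big)\otimes\delta_k(p_1\dots p_k,\sigma,q)$; $h_{\mathrm{V}(\mathcal{A})}$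 the unique homomorphism from $T_\Sigma$; $[\![\mathcal{A}]\!]^{\mathrm{init}}(\xi)=\bigoplus_q h_{\mathrm{V}(\mathcal{A})}(\xi)_q\otimes F_q$. Bottom-up deterministic: for all $k,\sigma,q_1,\dots,q_k$ at most one $q$ with $\delta_k(q_1\dots q_k,\sigma,q)\ne\mathbb{0}$. Crisp-deterministic: exactly one $q$ with value $\mathbb{1}$ and all others $\mathbb{0}$. Nerode algebra $\mathcal{N}(\mathcal{A})=(Q_{\mathcal{N}},\theta_{\mathcal{N}},F_{\mathcal{N}})$: smallest subalgebra of $\mathrm{V}(\mathcal{A})$ with $(F_{\mathcal{N}})_v=\bigoplus_q v_q\otimes F_q$; finite if $Q_{\mathcal{N}}$ finite. For finite $(\Sigma,B)$-algebra $(P,\theta,G)$, $\mathrm{rel}(P,\theta,G)=(P,\delta',G)$ with $\delta'_k(p_1\dots p_k,\sigma,p)=\mathbb{1}$ iff $\theta(\sigma)(p_1,\dots,p_k)=p$, else $\mathbb{0}$. *)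

From Stdlib Require List.
From mathcomp Require Import all_boot.
Set Implicit Arguments. Unset Strict Implicit. Unset Printing Implicit Defensive.

(* Strong bimonoid: commutative monoid (add,zero), monoid (mul,one), 0 <> 1,
   zero absorbing for mul, no distributivity. *)
Record strong_bimonoid := StrongBimonoid {
  car :> Type;
  sadd : car -> car -> car;
  smul : car -> car -> car;
  szero : car;
  sone : car;
  saddA : associative sadd;
  saddC : commutative sadd;
  sadd0l : left_id szero sadd;
  smulA : associative smul;
  smul1l : left_id sone smul;
  smul1r : right_id sone smul;
  smul0l : left_zero szero smul;
  smul0r : right_zero szero smul;
  szero_neq_one : szero <> sone }.

Section Defs.
Variable B : strong_bimonoid.

Definition finite_pred (X : B -> Prop) := exists l : seq B, forall x, X x -> List.In x l.

Inductive gen_alg (S : seq B) : B -> Prop :=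
| ga_in x : List.In x S -> gen_alg S x
| ga_zero : gen_alg S (szero B)
| ga_one : gen_alg S (sone B)
| ga_add x y : gen_alg S x -> gen_alg S y -> gen_alg S (sadd x y)
| ga_mul x y : gen_alg S x -> gen_alg S y -> gen_alg S (smul x y).

Inductive gen_mon (S : seq B) : B -> Prop :=
| gm_in x : List.In x S -> gen_mon S x
| gm_one : gen_mon S (sone B)
| gm_mul x y : gen_mon S x -> gen_mon S y -> gen_mon S (smul x y).

Definition locally_finite := forall S : seq B, finite_pred (gen_alg S).
Definition mult_locally_finite := forall S : seq B, finite_pred (gen_mon S).
End Defs.

Section Trees.
(* ranked alphabet: finite set Sigma with rank function rk; Sigma^(k) = {s | rk s = k} *)
Variables (Sigma : finType) (rk : Sigma -> nat).

Inductive tree := Node (s : Sigma) (ts : 'I_(rk s) -> tree).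

Variable B : strong_bimonoid.

(* (Sigma,B)-wta; delta s ps q stands for delta_k(p_1..p_k, s, q) with k = rk s *)
Record wta := Wta {
  st : finType;
  delta : forall s : Sigma, {ffun 'I_(rk s) -> st} -> st -> B;
  fin : st -> B }.

Variable A : wta.

Definition bu_deterministic :=
  forall s ps q q', @delta A s ps q <> szero B -> @delta A s ps q' <> szero B -> q = q'.

Definition deltaV (s : Sigma) (vs : 'I_(rk s) -> st A -> B) : st A -> B :=
  fun q => \big[@sadd B/szero B]_(p : {ffun 'I_(rk s) -> st A})
             smul (\big[@smul B/sone B]_(i < rk s) vs i (p i)) (@delta A s p q).

Fixpoint hV (t : tree) : st A -> B :=
  match t with Node s ts => deltaV (fun i => hV (ts i)) end.

Definition sem (t : tree) : B :=
  \big[@sadd B/szero B]_(q : st A) smul (hV t q) (@fin A q).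

Inductive nerode : (st A -> B) -> Prop :=
| nerode_step s (vs : 'I_(rk s) -> st A -> B) :
    (forall i, nerode (vs i)) -> nerode (deltaV vs).

Definition FN (v : st A -> B) : B := \big[@sadd B/szero B]_(q : st A) smul (v q) (@fin A q).
End Trees.

Definition rel_alg (Sigma : finType) (rk : Sigma -> nat) (B : strong_bimonoid) (P : finType)
  (theta : forall s : Sigma, ('I_(rk s) -> P) -> P) (G : P -> B) : wta rk B :=
  @Wta Sigma rk B P (fun s ps p => if theta s ps == p then sone B else szero B) G.

Arguments nerode {Sigma rk B} A _.
Arguments deltaV {Sigma rk B} A s vs _.
Arguments hV {Sigma rk B} A t _.
Arguments sem {Sigma rk B} A t.
Arguments FN {Sigma rk B} A v.
Arguments bu_deterministic {Sigma rk B} A.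
Arguments tree {Sigma} rk.

(* The entries of the Nerode vectors range over a finite subset of B.  If B is
   locally finite they lie in the subalgebra generated by the finitely many
   transition weights.  If the automaton is bottom-up deterministic, every
   Nerode vector has at most one nonzero entry, which is a product of
   transition weights, so the entries lie in {0} together with a finitely
   generated, hence finite, submonoid.  As Q is finite, there are then only
   finitely many Nerode vectors.  Finally rel(N(A)) is crisp-deterministic: on a
   tree t it reaches exactly the state h_V(A)(t) with weight 1, so its value on t
   is F_N(h_V(A)(t)), the value of A on t. *)
From HB Require Import structures.
From mathcomp Require Import all_boot boolp.

Set Implicit Arguments.
Unset Strict Implicit.
Unset Printing Implicit Defensive.

Lemma InP (T : eqType) (x : T) (s : seq T) : reflect (List.In x s) (x \in s).
Proof.
elim: s => [|y s IHs] /=; first by right.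
by rewrite in_cons; apply: (iffP orP) => [[/eqP->|/IHs]|[->|/IHs]]; auto.
Qed.

Lemma big_absorbing (R : Type) (idx z : R) (op : R -> R -> R) (I : eqType)
    (r : seq I) (F : I -> R) (i : I) :
  left_zero z op -> right_zero z op -> i \in r -> F i = z ->
  \big[op/idx]_(j <- r) F j = z.
Proof.
move=> op0l op0r + Fi; elim: r => // j r IHr; rewrite in_cons big_cons.
by case/predU1P => [<-|/IHr->]; rewrite ?Fi ?op0l ?op0r.
Qed.

Section StrongBimonoidStructure.
Variable B : strong_bimonoid.
HB.instance Definition _ :=
  Monoid.isComLaw.Build B (szero B) (@sadd B) (@saddA B) (@saddC B) (@sadd0l B).
HB.instance Definition _ :=
  Monoid.isLaw.Build B (sone B) (@smul B) (@smulA B) (@smul1l B) (@smul1r B).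
HB.instance Definition _ := gen_eqMixin B.
HB.instance Definition _ := gen_choiceMixin B.
End StrongBimonoidStructure.

Definition supported_at (B : strong_bimonoid) (Q : eqType) (v : Q -> B) (p : Q) :=
  forall q, q != p -> v q = szero B.

Section VectorAlgebra.
Variables (Sigma : finType) (rk : Sigma -> nat) (B : strong_bimonoid) (A : wta rk B).

Lemma deltaV_supported s (vs : 'I_(rk s) -> st A -> B)
    (p : {ffun 'I_(rk s) -> st A}) :
    (forall i, supported_at (vs i) (p i)) ->
  forall q, deltaV A s vs q =
            smul (\big[@smul B/sone B]_(i < rk s) vs i (p i)) (delta p q).
Proof.
move=> vs_supp q; rewrite /deltaV (big_only1 p) // => p' p'_neq _.
have /existsP[i p'_neq_i] : [exists i, p' i != p i].
  by apply: contraNT p'_neq => /existsPn p'_eq; apply/eqP/ffunP => i; apply/eqP/negPn.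
have i_enum := mem_index_enum i.
by rewrite (big_absorbing _ (@smul0l B) (@smul0r B) i_enum) ?smul0l ?vs_supp.
Qed.

End VectorAlgebra.

Section RelabelledAlgebra.
Variables (Sigma : finType) (rk : Sigma -> nat) (B : strong_bimonoid) (A : wta rk B).
Variables (P : finType) (emb : P -> st A -> B) (theta : forall s, ('I_(rk s) -> P) -> P).
Hypothesis emb_hom : forall s ps, emb (@theta s ps) = deltaV A s (fun i => emb (ps i)).

Fixpoint run (t : tree rk) : P :=
  let: Node s ts := t in @theta s (fun i => run (ts i)).

Lemma emb_run t : emb (run t) = hV A t.
Proof. by elim: t => s ts IHts /=; rewrite emb_hom; congr deltaV; apply: funext. Qed.

Let R := rel_alg theta (fun p => FN A (emb p)).

Lemma hV_rel_alg t : supported_at (hV R t) (run t) /\ hV R t (run t) = sone B.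
Proof.
elim: t => s ts IHts /=.
pose p := [ffun i => run (ts i)].
have run_p : (fun i => run (ts i)) = p by apply: funext => i; rewrite ffunE.
have supp i : supported_at (hV R (ts i)) (p i) by rewrite ffunE; apply: (IHts i).1.
rewrite run_p; split=> [q q_neq|]; rewrite (deltaV_supported supp) /=.
  by rewrite eq_sym (negPf q_neq) smul0r.
rewrite eqxx smul1r big1 // => i _; rewrite ffunE; exact: (IHts i).2.
Qed.

Lemma sem_rel_alg t : sem A t = sem R t.
Proof.
have [supp run1] := hV_rel_alg t.
rewrite /sem [RHS](big_only1 (run t)) // => [|q /supp-> _]; last exact: smul0l.
by rewrite run1 smul1l /= /FN emb_run.
Qed.

End RelabelledAlgebra.

Section NerodeEntries.
Variables (Sigma : finType) (rk : Sigma -> nat) (B : strong_bimonoid) (A : wta rk B).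

Definition transition_weights : seq B :=
  codom (fun x : {s : Sigma & {ffun 'I_(rk s) -> st A}} * st A =>
           delta (tagged x.1) x.2).

Lemma delta_in_weights s (p : {ffun 'I_(rk s) -> st A}) q :
  List.In (delta p q) transition_weights.
Proof. exact/InP/(codom_f _ (Tagged (fun s => {ffun 'I_(rk s) -> st A}) p, q)). Qed.

Lemma nerode_entries_gen_alg v :
  nerode A v -> forall q, gen_alg transition_weights (v q).
Proof.
elim=> {v} s vs _ IHvs q; apply: big_ind => [|x y|p _]; [exact: ga_zero|exact: ga_add|].
apply: ga_mul; last exact/ga_in/delta_in_weights.
by apply: big_ind => [|x y|i _]; [exact: ga_one|exact: ga_mul|exact: IHvs].
Qed.

Definition zero_or_gen_mon (x : B) := x = szero B \/ gen_mon transition_weights x.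

Lemma zero_or_gen_mon_mul x y :
  zero_or_gen_mon x -> zero_or_gen_mon y -> zero_or_gen_mon (smul x y).
Proof.
move=> [->|x_mon]; first by left; rewrite smul0l.
by move=> [->|y_mon]; [left; rewrite smul0r | right; apply: gm_mul].
Qed.

Hypothesis A_det : bu_deterministic A.
Variable q0 : st A.

Lemma delta_supported s (p : {ffun 'I_(rk s) -> st A}) :
  exists q, supported_at (delta p) q.
Proof.
have [[q delta_q]|delta0] := pselect (exists q, delta p q <> szero B).
  exists q => q' q'_neq; apply: contrapT => delta_q'.
  by move/eqP: q'_neq; apply; apply: A_det delta_q' delta_q.
by exists q0 => q _; apply: contrapT => delta_q; apply: delta0; exists q.
Qed.

Lemma nerode_det_supported v : nerode A v ->
  (exists p, supported_at v p) /\ forall q, zero_or_gen_mon (v q).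
Proof.
elim=> {v} s vs _ IHvs.
have /fin_all_exists[p vs_supp] : forall i, exists p, supported_at (vs i) p.
  by move=> i; apply: (IHvs i).1.
pose pf := [ffun i => p i].
have supp i : supported_at (vs i) (pf i) by rewrite ffunE.
have [q delta_supp] := delta_supported pf.
split=> [|q'].
  by exists q => q' q'_neq; rewrite (deltaV_supported supp) delta_supp ?smul0r.
rewrite (deltaV_supported supp); apply: zero_or_gen_mon_mul.
  apply: big_ind => [|x y|i _]; [right; exact: gm_one | exact: zero_or_gen_mon_mul |].
  exact: (IHvs i).2.
by right; apply/gm_in/delta_in_weights.
Qed.

End NerodeEntries.

Lemma nerode_entries_finite (Sigma : finType) (rk : Sigma -> nat) (B : strong_bimonoid)
    (A : wta rk B) :
  0 < #|st A| -> locally_finite B \/ mult_locally_finite B /\ bu_deterministic A ->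
  exists l : seq B, forall v, nerode A v -> forall q, v q \in l.
Proof.
move=> /card_gt0P[q0 _] [B_lf | [B_mlf A_det]].
  have [l gen_alg_l] := B_lf (transition_weights A).
  by exists l => v Nv q; apply/InP/gen_alg_l/nerode_entries_gen_alg.
have [l gen_mon_l] := B_mlf (transition_weights A).
exists (szero B :: l) => v Nv q; rewrite in_cons.
case: ((nerode_det_supported A_det q0 Nv).2 q) => [->|/gen_mon_l/InP->];
  by rewrite ?eqxx ?orbT.
Qed.

Section FiniteCoding.
Variables (Q : finType) (T : choiceType) (l : seq T) (N : (Q -> T) -> Prop).

Definition vec_of (c : {ffun Q -> seq_sub l}) (q : Q) : T := val (c q).

Definition coded_vec := {c : {ffun Q -> seq_sub l} | `[< N (vec_of c) >]}.

Definition val_vec (c : coded_vec) : Q -> T := vec_of (val c).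

Lemma val_vec_inj : injective val_vec.
Proof.
move=> c c' eq_vec; apply/val_inj/ffunP => q; apply/val_inj.
exact: (congr1 (fun v => v q) eq_vec).
Qed.

Lemma val_vecP c : N (val_vec c).
Proof. exact/asboolP/(valP c). Qed.

Hypothesis N_entries : forall v, N v -> forall q, v q \in l.

Definition code_ffun v (Nv : N v) : {ffun Q -> seq_sub l} :=
  [ffun q => SeqSub (N_entries Nv q)].

Lemma vec_of_code v (Nv : N v) : vec_of (code_ffun Nv) = v.
Proof. by apply: funext => q; rewrite /vec_of ffunE. Qed.

Lemma code_ffunP v (Nv : N v) : `[< N (vec_of (code_ffun Nv)) >].
Proof. by apply: asboolT; rewrite vec_of_code. Qed.

Definition code_vec v (Nv : N v) : coded_vec := Sub (code_ffun Nv) (code_ffunP Nv).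

Lemma code_vecK v (Nv : N v) : val_vec (code_vec Nv) = v.
Proof. exact: vec_of_code. Qed.

Lemma N_iff_coded v : N v <-> exists c, val_vec c = v.
Proof.
split=> [Nv|[c <-]]; last exact: val_vecP.
by exists (code_vec Nv); apply: code_vecK.
Qed.

End FiniteCoding.

Theorem corollary6p10 (Sigma : finType) (rk : Sigma -> nat) (B : strong_bimonoid)
  (A : wta rk B) :
  (exists s : Sigma, rk s = 0) ->
  0 < #|st A| ->
  (locally_finite B \/ (mult_locally_finite B /\ bu_deterministic A)) ->
  exists (P : finType) (emb : P -> st A -> B)
         (theta : forall s : Sigma, ('I_(rk s) -> P) -> P),
    [/\ injective emb,
        (forall v, nerode A v <-> exists p, emb p = v),
        (forall s ps, emb (theta s ps) = deltaV A s (fun i => emb (ps i))) &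
        (forall t : tree rk, sem A t = sem (@rel_alg Sigma rk B P theta (fun p => FN A (emb p))) t)].
Proof.
(* The nullary symbol only makes T_Sigma nonempty; the construction ignores it. *)
move=> _ Q_gt0 B_finite.
have [l l_entries] := nerode_entries_finite Q_gt0 B_finite.
pose P : finType := coded_vec l (nerode A).
pose emb : P -> st A -> B := @val_vec _ _ l (nerode A).
pose theta s (ps : 'I_(rk s) -> P) : P :=
  code_vec l_entries (nerode_step (fun i => val_vecP (ps i))).
have emb_hom s ps : emb (theta s ps) = deltaV A s (fun i => emb (ps i)).
  exact: code_vecK.
exists P, emb, theta; split=> //.
- exact: val_vec_inj.
- by move=> v; apply: N_iff_coded.
- exact: sem_rel_alg.
Qed.
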